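(* Let $g:[0,\infty)\to[0,\infty)$ be a function with $g(x)\to\infty$ as $x\to\infty$, and let $h,h':[0,\infty)\to[0,\infty)$ be slowly varying functions. Then there exists $f:[0,\infty)\to[0,\infty)$ such that $\lim_{x\to\infty}f(x)=\infty$, $\lim_{x\to\infty}f(x)/x=0$, $\lim_{x\to\infty}f(x)g(x)/x=\infty$, and $$\lim_{x\to\infty}\frac{h(x)}{h(f(x))}=1,\qquad \lim_{x\to\infty}\frac{h'(x)}{h'(f(x))}=1.$$
   Context: A function $h$ is slowly varying if $h(\lambda x)/h(x)\to1$ as $x\to\infty$ for every $\lambda>0$. *)

From Stdlib Require Import Reals.
From Coquelicot Require Import Coquelicot.
Open Scope R_scope.

(* Functions [0,oo) -> [0,oo) are modelled as R -> R that are
   nonnegative on [0,oo); only values on [0,oo) matter. *)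
Definition nonneg_on_halfline (f : R -> R) : Prop :=
  forall x, 0 <= x -> 0 <= f x.

Definition slowly_varying (h : R -> R) : Prop :=
  forall lam : R, 0 < lam ->
    is_lim (fun x => h (lam * x) / h x) p_infty (Finite 1).

(* Past a threshold N_n, the scale 2^n is "good" at x: x and g x exceed 4^n, and
   h(x)/h(x/2^n), h'(x)/h'(x/2^n) are within 2^-n of 1 (slow variation with
   lambda = 2^n).  A diagonal index k(x) -> oo with x beyond N_(k(x)) gives
   f x = x / 2^(k x): then f >= 2^k, f/x = 2^-k and f g / x = g / 2^k >= 2^k. *)

From Stdlib Require Import Reals Lra Lia ClassicalEpsilon.
From Coquelicot Require Import Coquelicot.
Open Scope R_scope.

Lemma le_Z_to_nat_up (n : nat) (x : R) : INR n <= x -> (n <= Z.to_nat (up x))%nat.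
Proof.
  intros Hx. destruct (archimed x) as [Hup _].
  assert (Hz : (Z.of_nat n < up x)%Z) by (apply lt_IZR; rewrite <- INR_IZR_INZ; lra).
  lia.
Qed.

Fixpoint last_reached (M : nat -> R) (x : R) (m : nat) : nat :=
  match m with
  | O => O
  | S m' => if Rlt_dec (M m) x then m else last_reached M x m'
  end.

Lemma last_reached_ge (M : nat -> R) (x : R) (m n : nat) :
  (n <= m)%nat -> M n < x -> (n <= last_reached M x m)%nat.
Proof.
  induction m as [| m IH]; intros Hnm Hn; simpl.
  - lia.
  - destruct (Rlt_dec (M (S m)) x); [lia |].
    destruct (Nat.eq_dec n (S m)) as [-> | Hne]; [contradiction | apply IH; [lia | exact Hn]].
Qed.

Lemma last_reached_lt (M : nat -> R) (x : R) (m : nat) :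
  M O < x -> M (last_reached M x m) < x.
Proof.
  intros H0. induction m as [| m IH]; simpl; [exact H0 |].
  destruct (Rlt_dec (M (S m)) x); assumption.
Qed.

Lemma diagonal_index (P : nat -> R -> Prop) :
  (forall n, Rbar_locally p_infty (P n)) ->
  exists k : R -> nat,
    filterlim k (Rbar_locally p_infty) eventually /\
    Rbar_locally p_infty (fun x => P (k x) x).
Proof.
  intros HP.
  destruct (choice (fun n M => forall x, M < x -> P n x) HP) as [M HM].
  (* Capping the search at [up x] keeps the "largest index whose threshold is passed" finite. *)
  exists (fun x => last_reached M x (Z.to_nat (up x))). split.
  - intros Q [K HQ]. exists (Rmax (M K) (INR K)). intros x Hx.
    pose proof (Rmax_l (M K) (INR K)). pose proof (Rmax_r (M K) (INR K)).
    apply HQ, last_reached_ge; [apply le_Z_to_nat_up |]; lra.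
  - exists (M O). intros x Hx. apply HM, last_reached_lt, Hx.
Qed.

Lemma slowly_varying_div (h : R -> R) (lam : R) :
  slowly_varying h -> 0 < lam ->
  is_lim (fun x => h x / h (x / lam)) p_infty 1.
Proof.
  intros Hh Hlam.
  apply is_lim_ext with (fun x => h (lam * (x / lam)) / h (x / lam)).
  { intros x. do 3 f_equal. field. lra. }
  apply (is_lim_comp (fun y => h (lam * y) / h y) (fun x => x / lam) p_infty 1 p_infty);
    [apply Hh, Hlam | |].
  - apply is_lim_spec. intros M. exists (M * lam). intros x Hx.
    apply Rlt_div_r; lra.
  - apply filter_forall. discriminate.
Qed.

Lemma is_lim_of_abs_sub_le_inv (u t : R -> R) (l : R) :
  is_lim t p_infty p_infty ->
  Rbar_locally p_infty (fun x => Rabs (u x - l) <= / t x) ->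
  is_lim u p_infty l.
Proof.
  intros Ht Hu. apply is_lim_spec. intros eps.
  assert (Hinv : is_lim (fun x => / t x) p_infty 0).
  { apply (is_lim_inv _ _ _ Ht). discriminate. }
  apply is_lim_spec in Hinv.
  generalize (filter_and _ _ Hu (Hinv eps)). apply filter_imp.
  intros x [Hux Htx]. rewrite Rminus_0_r in Htx.
  pose proof (Rle_abs (/ t x)). lra.
Qed.

Definition good_scale (g h h' : R -> R) (n : nat) (x : R) : Prop :=
  2 ^ n * 2 ^ n < x /\ 2 ^ n * 2 ^ n < g x /\
  Rabs (h x / h (x / 2 ^ n) - 1) < / 2 ^ n /\
  Rabs (h' x / h' (x / 2 ^ n) - 1) < / 2 ^ n.

Lemma good_scale_eventually (g h h' : R -> R) (n : nat) :
  is_lim g p_infty p_infty -> slowly_varying h -> slowly_varying h' ->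
  Rbar_locally p_infty (good_scale g h h' n).
Proof.
  intros Hg Hh Hh'.
  assert (Hpow : 0 < 2 ^ n) by (apply pow_lt; lra).
  pose (eps := mkposreal _ (Rinv_0_lt_compat _ Hpow)).
  repeat apply filter_and.
  - exists (2 ^ n * 2 ^ n). auto.
  - exact (proj2 (is_lim_spec _ _ _) Hg _).
  - exact (proj2 (is_lim_spec _ _ _) (slowly_varying_div h _ Hh Hpow) eps).
  - exact (proj2 (is_lim_spec _ _ _) (slowly_varying_div h' _ Hh' Hpow) eps).
Qed.

Theorem lemma1 (g h h' : R -> R)
  (Hg0 : nonneg_on_halfline g) (Hg : is_lim g p_infty p_infty)
  (Hh0 : nonneg_on_halfline h) (Hh'0 : nonneg_on_halfline h')
  (Hh : slowly_varying h) (Hh' : slowly_varying h') :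
  exists f : R -> R,
    nonneg_on_halfline f /\
    is_lim f p_infty p_infty /\
    is_lim (fun x => f x / x) p_infty (Finite 0) /\
    is_lim (fun x => f x * g x / x) p_infty p_infty /\
    is_lim (fun x => h x / h (f x)) p_infty (Finite 1) /\
    is_lim (fun x => h' x / h' (f x)) p_infty (Finite 1).
Proof.
  destruct (diagonal_index _ (fun n => good_scale_eventually g h h' n Hg Hh Hh'))
    as [k [Hk Hgood]].
  pose (t x := 2 ^ k x).
  assert (Ht : is_lim t p_infty p_infty).
  { exact (filterlim_comp _ _ _ k (pow 2) _ _ _ Hk (is_lim_seq_geom_p 2 ltac:(lra))). }
  assert (Htpos : forall x, 0 < t x) by (intros x; apply pow_lt; lra).
  exists (fun x => x / t x). repeat split.
  - intros x Hx. apply Rdiv_le_0_compat; [exact Hx | apply Htpos].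
  - apply (is_lim_le_p_loc t); [| exact Ht].
    generalize Hgood. apply filter_imp. intros x [Hx _].
    left. apply Rlt_div_r; [apply Htpos | exact Hx].
  - apply (is_lim_of_abs_sub_le_inv _ t); [exact Ht |].
    generalize Hgood. apply filter_imp. intros x [Hx _].
    specialize (Htpos x). fold (t x) in Hx.
    replace (x / t x / x - 0) with (/ t x) by (field; nra).
    rewrite Rabs_pos_eq; [lra | apply Rlt_le, Rinv_0_lt_compat, Htpos].
  - apply (is_lim_le_p_loc t); [| exact Ht].
    generalize Hgood. apply filter_imp. intros x [Hx [Hgx _]].
    specialize (Htpos x). fold (t x) in Hx, Hgx.
    replace (x / t x * g x / x) with (g x / t x) by (field; nra).
    left. apply Rlt_div_r; lra.
  - apply (is_lim_of_abs_sub_le_inv _ t); [exact Ht |].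
    generalize Hgood. apply filter_imp. intros x (_ & _ & Hx & _). apply Rlt_le, Hx.
  - apply (is_lim_of_abs_sub_le_inv _ t); [exact Ht |].
    generalize Hgood. apply filter_imp. intros x (_ & _ & _ & Hx). apply Rlt_le, Hx.
Qed.
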